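(* Let $\mathrm F\colon\mathcal A\rightleftarrows\mathcal B\colon\mathrm U$ be an adjunction (unit $\eta$, counit $\varepsilon$), $\mathbb T=(\mathrm{FU},\mathrm F\eta\mathrm U,\varepsilon)$, $\mathbb C$ a comonad on $\mathcal A$, $\mathbb S$ a comonad on $\mathcal B$ lifting $\mathbb C$ via a natural isomorphism $\Omega\colon\mathrm{CU}\Rightarrow\mathrm{US}$ with $(\mathrm U,\Omega)$ a lax morphism of comonads from $\mathbb C$ to $\mathbb S$, $\Lambda=\varepsilon\mathrm{SF}\circ\mathrm F\Omega\mathrm F\circ\mathrm{FC}\eta$ its mate and $\chi=\Lambda\mathrm U\circ\mathrm F\Omega^{-1}\colon\mathrm{TS}\Rightarrow\mathrm{ST}$. Let $\mathrm V\colon\mathcal C\rightleftarrows\mathcal B\colon\mathrm G$ be an adjunction (unit $\eta'$, counit $\varepsilon'$) with $\mathrm S=\mathrm{VG}$, $\Delta^{\mathbb S}=\mathrm V\eta'\mathrm G$, $\varepsilon^{\mathbb S}=\varepsilon'$; let $\mathbb Q$ be a comonad on $\mathcal C$ with a natural isomorphism $\tilde\Omega\colon\mathrm{QG}\Rightarrow\mathrm{GT}$ such that $(\mathrm G,\tilde\Omega)$ is a lax isomorphism of comonads from $\mathbb Q$ to $\mathbb T$, and assume its mate $\tilde\Lambda=\varepsilon'\mathrm{TV}\circ\mathrm V\tilde\Omega\mathrm V\circ\mathrm{VQ}\eta'\colon\mathrm{VQ}\Rightarrow\mathrm{TV}$ is invertible. Put $\psi=\tilde\Lambda\mathrm G\circ\mathrm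 V\tilde\Omega^{-1}$. Let $\mathrm K\colon\mathcal A\to\mathcal C$ be a functor with $\mathrm{VK}=\mathrm F$ (strictly) which is an equivalence, with quasi-inverse $\bar{\mathrm K}$, and let $\xi\colon\mathrm K\bar{\mathrm K}\Rightarrow\mathrm{id}_{\mathcal C}$ and $\phi\colon\mathrm{id}_{\mathcal A}\Rightarrow\bar{\mathrm K}\mathrm K$ be the (invertible) counit and unit of an adjunction $\mathrm K\dashv\bar{\mathrm K}$. Let $\overline{\mathbb Q}$ be the comonad on $\mathcal A$ with underlying functor $\bar{\mathrm K}\mathrm Q\mathrm K$, comultiplication $\bar{\mathrm K}\mathrm Q\xi^{-1}\mathrm Q\mathrm K\circ\bar{\mathrm K}\Delta^{\mathbb Q}\mathrm K$ and counit $\phi^{-1}\circ\bar{\mathrm K}\varepsilon^{\mathbb Q}\mathrm K$. If $\chi=\psi^{-1}$, then for every category $\mathcal Z$ and functor $\mathrm N\colon\mathcal B\to\mathcal Z$, the left $\chi$-coalgebra structures on $\mathrm N$ correspond bijectively to $\overline{\mathbb Q}$-opcoalgebra structures on $\mathrm{NF}=\mathrm{NVK}$.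
   Context: Juxtaposition denotes composition/whiskering, $\circ$ vertical composition. Lax morphism of comonads from $\mathbb C'$ to $\mathbb D$: $(\mathrm G,\sigma)$, $\sigma\colon\mathrm C'\mathrm G\Rightarrow\mathrm{GD}$, $\mathrm G\Delta^{\mathbb D}\circ\sigma=\sigma\mathrm D\circ\mathrm C'\sigma\circ\Delta^{\mathbb C'}\mathrm G$, $\mathrm G\varepsilon^{\mathbb D}\circ\sigma=\varepsilon^{\mathbb C'}\mathrm G$ (isomorphism if $\sigma$ invertible). A left $\chi$-coalgebra structure on $\mathrm N\colon\mathcal B\to\mathcal Z$ is $\lambda\colon\mathrm{NS}\Rightarrow\mathrm{NT}$ with $\mathrm N\Delta^{\mathbb T}\circ\lambda=\lambda\mathrm T\circ\mathrm N\chi\circ\lambda\mathrm S\circ\mathrm N\Delta^{\mathbb S}$ and $\mathrm N\varepsilon^{\mathbb T}\circ\lambda=\mathrm N\varepsilon^{\mathbb S}$. For a comonad $\mathbb D$ on a category $\mathcal D$, a $\mathbb D$-opcoalgebra structure on $\mathrm P\colon\mathcal D\to\mathcal Z$ is $\nabla\colon\mathrm P\Rightarrow\mathrm{PD}$ with $\mathrm P\Delta^{\mathbb D}\circ\nabla=\nabla\mathrm D\circ\nabla$ and $\mathrm P\varepsilon^{\mathbb D}\circ\nabla=\mathrm{id}_{\mathrm P}$. *)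

(* Natural transformations are represented by their families of components
   ([Trans]); naturality is a separate predicate ([natural]). *)
Set Implicit Arguments.
Unset Strict Implicit.

Record Category := {
  Ob :> Type;
  Hom : Ob -> Ob -> Type;
  idm : forall a, Hom a a;
  comp : forall a b c, Hom b c -> Hom a b -> Hom a c;
  comp_id_l : forall a b (f : Hom a b), comp (idm b) f = f;
  comp_id_r : forall a b (f : Hom a b), comp f (idm a) = f;
  comp_assoc : forall a b c d (h : Hom c d) (g : Hom b c) (f : Hom a b),
      comp h (comp g f) = comp (comp h g) f }.

Arguments Hom {_} _ _.
Arguments idm {_} _.
Arguments comp {_ _ _ _} _ _.
Notation "g ∘ f" := (comp g f) (at level 40, left associativity).

Record Functor (C D : Category) := {
  fobj :> C -> D;
  fmap : forall a b, Hom a b -> Hom (fobj a) (fobj b);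
  fmap_id : forall a, fmap (idm a) = idm (fobj a);
  fmap_comp : forall a b c (g : Hom b c) (f : Hom a b),
      fmap (g ∘ f) = fmap g ∘ fmap f }.
Arguments fmap {C D} _ {a b} _.

Definition IdF (C : Category) : Functor C C.
Proof.
  refine {| fobj := fun x => x; fmap := fun a b f => f |}; reflexivity.
Defined.

Definition FComp (C D E : Category) (G : Functor D E) (F : Functor C D) : Functor C E.
Proof.
  refine {| fobj := fun x => G (F x); fmap := fun a b f => fmap G (fmap F f) |}.
  - intro a; rewrite !fmap_id; reflexivity.
  - intros; rewrite !fmap_comp; reflexivity.
Defined.

Definition Trans (C D : Category) (F G : Functor C D) :=
  forall x : C, Hom (F x) (G x).

Definition natural (C D : Category) (F G : Functor C D) (s : Trans F G) : Prop :=
  forall x y (f : Hom x y), fmap G f ∘ s x = s y ∘ fmap F f.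

Definition nat_iso (C D : Category) (F G : Functor C D) (s : Trans F G) (sinv : Trans G F) : Prop :=
  natural s /\ forall x, sinv x ∘ s x = idm _ /\ s x ∘ sinv x = idm _.

Definition is_iso (C : Category) (a b : C) (f : Hom a b) : Prop :=
  exists g : Hom b a, g ∘ f = idm a /\ f ∘ g = idm b.

Definition is_adjunction (C D : Category) (F : Functor C D) (U : Functor D C)
  (eta : Trans (IdF C) (FComp U F)) (eps : Trans (FComp F U) (IdF D)) : Prop :=
  natural eta /\ natural eps /\
  (forall a, eps (F a) ∘ fmap F (eta a) = idm (F a)) /\
  (forall b, fmap U (eps b) ∘ eta (U b) = idm (U b)).

Record ComonadData (C : Category) := {
  cfun :> Functor C C;
  cdelta : Trans cfun (FComp cfun cfun);
  ceps : Trans cfun (IdF C) }.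
Arguments cdelta {C} _ _.
Arguments ceps {C} _ _.

Definition is_comonad (C : Category) (D : ComonadData C) : Prop :=
  natural (cdelta D) /\ natural (ceps D) /\
  (forall x, cdelta D (D x) ∘ cdelta D x = fmap D (cdelta D x) ∘ cdelta D x) /\
  (forall x, ceps D (D x) ∘ cdelta D x = idm (D x)) /\
  (forall x, fmap D (ceps D x) ∘ cdelta D x = idm (D x)).

Definition adj_comonad (C D : Category) (F : Functor C D) (U : Functor D C)
  (eta : Trans (IdF C) (FComp U F)) (eps : Trans (FComp F U) (IdF D)) : ComonadData D :=
  {| cfun := FComp F U;
     cdelta := fun b => fmap F (eta (U b));
     ceps := eps |}.

Definition lax_morphism (X Y : Category) (C' : ComonadData X) (D : ComonadData Y)
  (G : Functor Y X) (s : Trans (FComp C' G) (FComp G D)) : Prop :=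
  natural s /\
  (forall y, fmap G (cdelta D y) ∘ s y = s (D y) ∘ fmap C' (s y) ∘ cdelta C' (G y)) /\
  (forall y, fmap G (ceps D y) ∘ s y = ceps C' (G y)).

Definition mate (A B : Category) (F : Functor A B) (U : Functor B A)
  (eta : Trans (IdF A) (FComp U F)) (eps : Trans (FComp F U) (IdF B))
  (Cf : Functor A A) (S : Functor B B) (Om : Trans (FComp Cf U) (FComp U S))
  : Trans (FComp F Cf) (FComp S F) :=
  fun a => eps (S (F a)) ∘ fmap F (Om (F a)) ∘ fmap F (fmap Cf (eta a)).

Definition twist (A B : Category) (F : Functor A B) (U : Functor B A)
  (eta : Trans (IdF A) (FComp U F)) (eps : Trans (FComp F U) (IdF B))
  (Cf : Functor A A) (S : Functor B B) (Om : Trans (FComp Cf U) (FComp U S))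
  (Ominv : Trans (FComp U S) (FComp Cf U))
  : Trans (FComp (FComp F U) S) (FComp S (FComp F U)) :=
  fun b => mate eta eps Om (U b) ∘ fmap F (Ominv b).

Definition Qbar (A C : Category) (K : Functor A C) (Kb : Functor C A)
  (Q : ComonadData C) (xiinv : Trans (IdF C) (FComp K Kb))
  (phiinv : Trans (FComp Kb K) (IdF A)) : ComonadData A :=
  {| cfun := FComp Kb (FComp Q K);
     cdelta := fun a => fmap Kb (fmap Q (xiinv (Q (K a)))) ∘ fmap Kb (cdelta Q (K a));
     ceps := fun a => phiinv a ∘ fmap Kb (ceps Q (K a)) |}.

Definition left_coalg (B Z : Category) (S T : ComonadData B)
  (chi : Trans (FComp T S) (FComp S T)) (N : Functor B Z)
  (l : Trans (FComp N S) (FComp N T)) : Prop :=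
  natural l /\
  (forall b, fmap N (cdelta T b) ∘ l b
             = l (T b) ∘ fmap N (chi b) ∘ l (S b) ∘ fmap N (cdelta S b)) /\
  (forall b, fmap N (ceps T b) ∘ l b = fmap N (ceps S b)).

Definition opcoalg (D Z : Category) (Dm : ComonadData D) (P : Functor D Z)
  (nb : Trans P (FComp P Dm)) : Prop :=
  natural nb /\
  (forall a, fmap P (cdelta Dm a) ∘ nb a = nb (Dm a) ∘ nb a) /\
  (forall a, fmap P (ceps Dm a) ∘ nb a = idm (P a)).

Definition in_bijection (X Y : Type) : Prop :=
  exists (f : X -> Y) (g : Y -> X), (forall x, g (f x) = x) /\ (forall y, f (g y) = y).

Arguments is_adjunction {C D} F U eta eps.
Arguments lax_morphism {X Y} C' D G s.
Arguments left_coalg {B Z} S T chi N l.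
Arguments opcoalg {D Z} Dm P nb.

(* Transposition along V ⊣ G turns a Q-opcoalgebra structure ν : NV ⇒ NVQ into
   λ = N(ε'T ∘ VΩ̃) ∘ νG : NS ⇒ NT, with inverse λ ↦ NΛ̃⁻¹ ∘ λV ∘ NVη'. The lax-morphism
   laws of (G, Ω̃) and the identity χ ∘ Λ̃G = VΩ̃ (which needs only the half χ ∘ ψ = id of
   the hypothesis) show that the left χ-coalgebra axioms for λ are the transposes of the
   opcoalgebra axioms for ν; transposition reflects equations because the mates Λ̃ of Ω̃
   and TΛ̃ ∘ Λ̃Q of Ω̃T ∘ QΩ̃ are invertible. Finally, as K is an equivalence,
   ν ↦ NVξ⁻¹QK ∘ νK identifies Q-opcoalgebra structures on NV with Q̄-opcoalgebra
   structures on NVK, a natural transformation between functors on 𝒞 being determined by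
   its components at the objects K a. *)

From Stdlib Require Import FunctionalExtensionality ProofIrrelevance IndefiniteDescription.

Set Implicit Arguments.
Unset Strict Implicit.

Ltac comp_norm :=
  simpl; rewrite ?fmap_comp, ?fmap_id; repeat rewrite <- comp_assoc;
  rewrite ?comp_id_l, ?comp_id_r.

Ltac comp_norm_in E :=
  simpl in E; rewrite ?fmap_comp, ?fmap_id in E; repeat rewrite <- comp_assoc in E;
  rewrite ?comp_id_l, ?comp_id_r in E.

Ltac chain_append t h :=
  lazymatch t with
  | ?f ∘ ?g => let g' := chain_append g h in constr:(f ∘ g')
  | _ => constr:(t ∘ h)
  end.

(* Rewrites with an equation between right-associated composites, also where its
   left side is only a prefix of a longer composite in the goal. *)
Ltac rw E :=
  first
    [ rewrite E
    | lazymatch type of E with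
      | @eq (@Hom ?C ?x _) ?L ?R =>
          let E' := fresh in let o := fresh "o" in let h := fresh "h" in
          assert (E' : forall o (h : @Hom C o x),
                     ltac:(let t := chain_append L h in exact (t = R ∘ h)))
            by (intros o h; rewrite <- E; repeat rewrite <- comp_assoc; reflexivity);
          rewrite E'; clear E'
      end ];
  repeat rewrite <- comp_assoc; rewrite ?comp_id_l, ?comp_id_r.

Ltac rw_n E := let E' := fresh in pose proof E as E'; comp_norm_in E'; rw E'; clear E'.
Ltac rw_n_r E := let E' := fresh in pose proof (eq_sym E) as E'; comp_norm_in E'; rw E'; clear E'.

Lemma split_mono_cancel {C : Category} {a b c : C} (m : Hom b c) (r : Hom c b) (x y : Hom a b) :
  r ∘ m = idm b -> m ∘ x = m ∘ y -> x = y.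
Proof.
  intros Hr E. rewrite <- (comp_id_l x), <- (comp_id_l y), <- Hr, <- !comp_assoc, E.
  reflexivity.
Qed.

Lemma split_epi_cancel {C : Category} {a b c : C} (e : Hom a b) (s : Hom b a) (x y : Hom b c) :
  e ∘ s = idm b -> x ∘ e = y ∘ e -> x = y.
Proof.
  intros Hs E. rewrite <- (comp_id_r x), <- (comp_id_r y), <- Hs, !comp_assoc, E.
  reflexivity.
Qed.

Lemma is_iso_comp {C : Category} {a b c : C} (g : Hom b c) (f : Hom a b) :
  is_iso g -> is_iso f -> is_iso (g ∘ f).
Proof.
  intros [g' [Hg1 Hg2]] [f' [Hf1 Hf2]]. exists (f' ∘ g'). split.
  - comp_norm. rw Hg1. exact Hf1.
  - comp_norm. rw Hf2. exact Hg2.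
Qed.

Lemma is_iso_fmap {C D : Category} (F : Functor C D) {a b : C} (f : Hom a b) :
  is_iso f -> is_iso (fmap F f).
Proof.
  intros [f' [H1 H2]]. exists (fmap F f').
  split; rewrite <- fmap_comp, <- fmap_id; f_equal; assumption.
Qed.

Lemma natural_inv {C D : Category} {F G : Functor C D} (s : Trans F G) (si : Trans G F) :
  nat_iso s si -> natural si.
Proof.
  intros [Hs Hi] x y f. destruct (Hi x) as [_ Hx]. destruct (Hi y) as [Hy _].
  rewrite <- (comp_id_l (fmap F f ∘ si x)), <- Hy. comp_norm.
  rw_n_r (Hs _ _ f). rw Hx. reflexivity.
Qed.

Lemma trans_inverse {C D : Category} {F G : Functor C D} (s : Trans F G) :
  (forall x, is_iso (s x)) ->
  {si : Trans G F | forall x, si x ∘ s x = idm _ /\ s x ∘ si x = idm _}.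
Proof.
  intros H. exists (fun x => proj1_sig (constructive_indefinite_description _ (H x))).
  intro x. exact (proj2_sig (constructive_indefinite_description _ (H x))).
Qed.

Lemma in_bijection_sym (X Y : Type) : in_bijection X Y -> in_bijection Y X.
Proof. intros [f [g [H1 H2]]]. exists g, f. split; assumption. Qed.

Lemma in_bijection_trans (X Y W : Type) :
  in_bijection X Y -> in_bijection Y W -> in_bijection X W.
Proof.
  intros [f [g [H1 H2]]] [f' [g' [H3 H4]]].
  exists (fun x => f' (f x)), (fun w => g (g' w)). split; intros.
  - rewrite H3. apply H1.
  - rewrite H2. apply H4.
Qed.

Lemma in_bijection_sig {X Y : Type} (NX PX : X -> Prop) (NY PY : Y -> Prop)
  (f : X -> Y) (g : Y -> X) :
  (forall x, PX x -> NX x) -> (forall y, PY y -> NY y) ->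
  (forall x, NX x -> NY (f x)) -> (forall y, NY y -> NX (g y)) ->
  (forall x, NX x -> g (f x) = x) -> (forall y, NY y -> f (g y) = y) ->
  (forall x, NX x -> PY (f x) <-> PX x) ->
  in_bijection {x | PX x} {y | PY y}.
Proof.
  intros PNX PNY Nf Ng gK fK Hiff.
  assert (Pg : forall y, PY y -> PX (g y)).
  { intros y Hy. apply Hiff; [now apply Ng, PNY|]. now rewrite fK by now apply PNY. }
  exists (fun x => exist _ (f (proj1_sig x)) (proj2 (Hiff _ (PNX _ (proj2_sig x))) (proj2_sig x))).
  exists (fun y => exist _ (g (proj1_sig y)) (Pg _ (proj2_sig y))).
  split; [intros [x Hx] | intros [y Hy]]; apply eq_sig_hprop;
    try (intros; apply proof_irrelevance); simpl; auto.
Qed.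

Lemma natural_eq_on_image {A C D : Category} (K : Functor A C) (Kb : Functor C A)
  (xi : Trans (FComp K Kb) (IdF C)) {P P' : Functor C D} (X Y : Trans P P') :
  (forall c, is_iso (xi c)) -> natural X -> natural Y ->
  (forall a, X (K a) = Y (K a)) -> forall c, X c = Y c.
Proof.
  intros Hxi HX HY E c. destruct (Hxi c) as [s [_ Hs]].
  apply (split_epi_cancel (e := fmap P (xi c)) (s := fmap P s)).
  - rewrite <- fmap_comp, Hs. apply fmap_id.
  - transitivity (fmap P' (xi c) ∘ X (K (Kb c))); [symmetry; apply HX|].
    rewrite E. apply HY.
Qed.

Section OpcoalgebraMaps.

Variables (D Z : Category) (Dm : ComonadData D) (P : Functor D Z).
Hypothesis HD : is_comonad Dm.
Variable nb : Trans P (FComp P Dm).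

Lemma natural_opcoalg_counit : natural nb ->
  natural (fun a => fmap P (ceps Dm a) ∘ nb a : Hom (P a) (FComp P (IdF D) a)).
Proof.
  destruct HD as [_ [Heps _]]. intros Hnb a a' f. comp_norm.
  rw_n (f_equal (fmap P) (Heps _ _ f)). rw_n (Hnb _ _ f). reflexivity.
Qed.

Lemma natural_opcoalg_comult : natural nb ->
  natural (fun a => fmap P (cdelta Dm a) ∘ nb a : Hom (P a) (FComp P (FComp Dm Dm) a)).
Proof.
  destruct HD as [Hdelta _]. intros Hnb a a' f. comp_norm.
  rw_n (f_equal (fmap P) (Hdelta _ _ f)). rw_n (Hnb _ _ f). reflexivity.
Qed.

Lemma natural_opcoalg_twice : natural nb ->
  natural (fun a => nb (Dm a) ∘ nb a : Hom (P a) (FComp P (FComp Dm Dm) a)).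
Proof.
  intros Hnb a a' f. comp_norm. rw_n (Hnb _ _ (fmap Dm f)). rw_n (Hnb _ _ f). reflexivity.
Qed.

End OpcoalgebraMaps.

Section Mates.

Variables (B Cc : Category) (V : Functor Cc B) (G : Functor B Cc).
Variables (eta : Trans (IdF Cc) (FComp G V)) (eps : Trans (FComp V G) (IdF B)).
Hypothesis Hadj : is_adjunction V G eta eps.

Definition transpose (R : Functor Cc Cc) (T : Functor B B)
  (sigma : Trans (FComp R G) (FComp G T)) : Trans (FComp V (FComp R G)) T :=
  fun b => eps (T b) ∘ fmap V (sigma b).

Definition sq_id : Trans (FComp (IdF Cc) G) (FComp G (IdF B)) := fun b => idm (G b).

Definition sq_paste (R1 R2 : Functor Cc Cc) (T1 T2 : Functor B B)
  (sigma1 : Trans (FComp R1 G) (FComp G T1)) (sigma2 : Trans (FComp R2 G) (FComp G T2))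
  : Trans (FComp (FComp R1 R2) G) (FComp G (FComp T1 T2)) :=
  fun b => sigma1 (T2 b) ∘ fmap R1 (sigma2 b).

Lemma mate_natural (R : Functor Cc Cc) (T : Functor B B) (sigma : Trans (FComp R G) (FComp G T)) :
  natural sigma -> natural (mate eta eps sigma).
Proof.
  destruct Hadj as [Heta [Heps _]]. intros Hs c c' f. unfold mate. comp_norm.
  rw_n (Heps _ _ (fmap T (fmap V f))).
  rw_n (f_equal (fmap V) (Hs _ _ (fmap V f))).
  rw_n (f_equal (fmap V) (f_equal (fmap R) (Heta _ _ f))).
  reflexivity.
Qed.

Lemma mate_counit (R : Functor Cc Cc) (T : Functor B B) (sigma : Trans (FComp R G) (FComp G T)) :
  natural sigma -> forall b, fmap T (eps b) ∘ mate eta eps sigma (G b) = transpose sigma b.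
Proof.
  destruct Hadj as [_ [Heps [_ Htri]]]. intros Hs b. unfold mate, transpose. comp_norm.
  rw_n (Heps _ _ (fmap T (eps b))).
  rw_n (f_equal (fmap V) (Hs _ _ (eps b))).
  rw_n (f_equal (fmap V) (f_equal (fmap R) (Htri b))).
  reflexivity.
Qed.

Lemma mate_unit (R : Functor Cc Cc) (T : Functor B B) (sigma : Trans (FComp R G) (FComp G T)) c :
  fmap G (mate eta eps sigma c) ∘ eta (R c) = sigma (V c) ∘ fmap R (eta c).
Proof.
  destruct Hadj as [Heta [_ [_ Htri]]]. unfold mate. comp_norm.
  rw_n (Heta _ _ (fmap R (eta c))). rw_n (Heta _ _ (sigma (V c))). rw_n (Htri (T (V c))).
  reflexivity.
Qed.

Lemma mate_paste (R1 R2 : Functor Cc Cc) (T1 T2 : Functor B B)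
  (sigma1 : Trans (FComp R1 G) (FComp G T1)) (sigma2 : Trans (FComp R2 G) (FComp G T2)) :
  natural sigma1 -> forall c,
  mate eta eps (sq_paste sigma1 sigma2) c
  = fmap T1 (mate eta eps sigma2 c) ∘ mate eta eps sigma1 (R2 c).
Proof.
  destruct Hadj as [_ [Heps _]]. intros Hs1 c.
  unfold mate at 3. unfold mate at 1, sq_paste. comp_norm.
  rw_n (Heps _ _ (fmap T1 (mate eta eps sigma2 c))).
  rw_n (f_equal (fmap V) (Hs1 _ _ (mate eta eps sigma2 c))).
  rw_n (f_equal (fmap V) (f_equal (fmap R1) (mate_unit sigma2 c))).
  reflexivity.
Qed.

Lemma mate_sq_id c : mate eta eps sq_id c = idm (V c).
Proof.
  destruct Hadj as [_ [_ [Htri _]]]. unfold mate, sq_id. comp_norm. exact (Htri c).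
Qed.

(* By naturality, [N (mate sigma) ∘ X] is the transposed composite at [G V c] precomposed
   with [H eta]; the invertible mate then cancels. *)
Lemma transpose_cancel (Z : Category) (N : Functor B Z) (H : Functor Cc Z)
  (R : Functor Cc Cc) (T : Functor B B) (sigma : Trans (FComp R G) (FComp G T))
  (X Y : Trans H (FComp (FComp N V) R)) :
  (forall c, is_iso (mate eta eps sigma c)) -> natural X -> natural Y ->
  (forall b, fmap N (transpose sigma b) ∘ X (G b) = fmap N (transpose sigma b) ∘ Y (G b)) ->
  forall c, X c = Y c.
Proof.
  intros Hiso HX HY E c. destruct (Hiso c) as [m [Hm _]].
  assert (Hmate : forall W : Trans H (FComp (FComp N V) R), natural W ->
    fmap N (mate eta eps sigma c) ∘ W c
    = (fmap N (transpose sigma (V c)) ∘ W (G (V c))) ∘ fmap H (eta c)).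
  { intros W HW. unfold mate, transpose. comp_norm. rw_n (HW _ _ (eta c)). reflexivity. }
  apply (split_mono_cancel (m := fmap N (mate eta eps sigma c)) (r := fmap N m)).
  - rewrite <- fmap_comp, Hm. apply fmap_id.
  - rewrite (Hmate X HX), (Hmate Y HY), E. reflexivity.
Qed.

End Mates.

Section LeftCoalgebras.

Variables (B Cc Z : Category) (V : Functor Cc B) (G : Functor B Cc).
Variables (eta : Trans (IdF Cc) (FComp G V)) (eps : Trans (FComp V G) (IdF B)).
Hypothesis Hadj : is_adjunction V G eta eps.
Variables (T : ComonadData B) (Q : ComonadData Cc).
Hypothesis HQ : is_comonad Q.
Variables (Om : Trans (FComp Q G) (FComp G T)) (Ominv : Trans (FComp G T) (FComp Q G)).
Hypotheses (HOm : nat_iso Om Ominv) (HOmlax : lax_morphism Q T G Om).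
Variable Linv : Trans (FComp T V) (FComp V Q).
Hypothesis HL : forall c, Linv c ∘ mate eta eps Om c = idm _ /\ mate eta eps Om c ∘ Linv c = idm _.
Variable chi : Trans (FComp T (adj_comonad eta eps)) (FComp (adj_comonad eta eps) T).
Hypothesis Hchi : forall b, chi b ∘ twist eta eps Om Ominv b = idm _.
Variable N : Functor B Z.

Notation S := (adj_comonad eta eps).

Definition lcoalg_of_opcoalg (nb : Trans (FComp N V) (FComp (FComp N V) Q))
  : Trans (FComp N S) (FComp N T) :=
  fun b => fmap N (transpose eps Om b) ∘ nb (G b).

Definition opcoalg_of_lcoalg (l : Trans (FComp N S) (FComp N T))
  : Trans (FComp N V) (FComp (FComp N V) Q) :=
  fun c => fmap N (Linv c) ∘ l (V c) ∘ fmap N (fmap V (eta c)).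

Lemma chi_mate b : chi b ∘ mate eta eps Om (G b) = fmap V (Om b).
Proof.
  destruct HOm as [_ HOmi].
  transitivity ((chi b ∘ twist eta eps Om Ominv b) ∘ fmap V (Om b)).
  - unfold twist. comp_norm. rw_n (f_equal (fmap V) (proj1 (HOmi b))). reflexivity.
  - rewrite Hchi. apply comp_id_l.
Qed.

Lemma natural_lcoalg_of_opcoalg nb : natural nb -> natural (lcoalg_of_opcoalg nb).
Proof.
  destruct Hadj as [_ [Heps _]]. destruct HOm as [HOmn _].
  intros Hn b b' f. unfold lcoalg_of_opcoalg, transpose. comp_norm.
  rw_n (f_equal (fmap N) (Heps _ _ (fmap T f))).
  rw_n (f_equal (fmap N) (f_equal (fmap V) (HOmn _ _ f))).
  rw_n (Hn _ _ (fmap G f)).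
  reflexivity.
Qed.

Lemma natural_opcoalg_of_lcoalg l : natural l -> natural (opcoalg_of_lcoalg l).
Proof.
  destruct Hadj as [Heta _]. destruct HOm as [HOmn _].
  pose proof (natural_inv (conj (mate_natural Hadj HOmn) HL)) as HLinv.
  intros Hl c c' f. unfold opcoalg_of_lcoalg. comp_norm.
  rw_n (f_equal (fmap N) (HLinv _ _ f)).
  rw_n (Hl _ _ (fmap V f)).
  rw_n (f_equal (fmap N) (f_equal (fmap V) (Heta _ _ f))).
  reflexivity.
Qed.

Lemma lcoalg_of_opcoalgK nb : natural nb -> opcoalg_of_lcoalg (lcoalg_of_opcoalg nb) = nb.
Proof.
  intros Hn. apply functional_extensionality_dep. intro c.
  unfold opcoalg_of_lcoalg, lcoalg_of_opcoalg, transpose. comp_norm.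
  rw_n_r (Hn _ _ (eta c)).
  pose proof (proj1 (HL c)) as E. unfold mate in E. rw_n (f_equal (fmap N) E).
  reflexivity.
Qed.

Lemma opcoalg_of_lcoalgK l : natural l -> lcoalg_of_opcoalg (opcoalg_of_lcoalg l) = l.
Proof.
  destruct Hadj as [_ [_ [_ Htri]]]. destruct HOm as [HOmn _].
  intros Hl. apply functional_extensionality_dep. intro b.
  unfold opcoalg_of_lcoalg, lcoalg_of_opcoalg.
  rewrite <- (mate_counit Hadj HOmn). comp_norm.
  rw_n (f_equal (fmap N) (proj2 (HL (G b)))).
  rw_n (Hl _ _ (eps b)).
  rw_n (f_equal (fmap N) (f_equal (fmap V) (Htri b))).
  reflexivity.
Qed.

Lemma lcoalg_of_opcoalg_counit nb b :
  fmap N (ceps T b) ∘ lcoalg_of_opcoalg nb b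
  = fmap N (transpose eps (sq_id G) b) ∘ (fmap (FComp N V) (ceps Q (G b)) ∘ nb (G b)).
Proof.
  destruct Hadj as [_ [Heps _]]. destruct HOmlax as [_ [_ Hlax]].
  unfold lcoalg_of_opcoalg, transpose, sq_id. comp_norm.
  rw_n (f_equal (fmap N) (Heps _ _ (ceps T b))).
  rw_n (f_equal (fmap N) (f_equal (fmap V) (Hlax b))).
  reflexivity.
Qed.

Lemma lcoalg_of_opcoalg_comult_l nb b :
  fmap N (cdelta T b) ∘ lcoalg_of_opcoalg nb b
  = fmap N (transpose eps (sq_paste Om Om) b) ∘ (fmap (FComp N V) (cdelta Q (G b)) ∘ nb (G b)).
Proof.
  destruct Hadj as [_ [Heps _]]. destruct HOmlax as [_ [Hlax _]].
  unfold lcoalg_of_opcoalg, transpose, sq_paste. comp_norm.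
  rw_n (f_equal (fmap N) (Heps _ _ (cdelta T b))).
  rw_n (f_equal (fmap N) (f_equal (fmap V) (Hlax b))).
  reflexivity.
Qed.

Lemma lcoalg_of_opcoalg_comult_r nb b : natural nb ->
  lcoalg_of_opcoalg nb (T b) ∘ fmap N (chi b) ∘ lcoalg_of_opcoalg nb (S b) ∘ fmap N (cdelta S b)
  = fmap N (transpose eps (sq_paste Om Om) b) ∘ (nb (Q (G b)) ∘ nb (G b)).
Proof.
  intros Hn. unfold lcoalg_of_opcoalg, transpose, sq_paste. comp_norm.
  rw_n_r (Hn _ _ (eta (G b))).
  pose proof (chi_mate b) as E. unfold mate in E. rw_n (f_equal (fmap N) E).
  rw_n_r (Hn _ _ (Om b)).
  reflexivity.
Qed.

Lemma mate_paste_iso c : is_iso (mate eta eps (sq_paste Om Om) c).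
Proof.
  destruct HOm as [HOmn _]. rewrite (mate_paste Hadj Om HOmn).
  apply is_iso_comp; [apply (is_iso_fmap T)|]; exists (Linv _); apply HL.
Qed.

Lemma lcoalg_of_opcoalg_comultP nb : natural nb ->
  (forall b, fmap N (cdelta T b) ∘ lcoalg_of_opcoalg nb b
             = lcoalg_of_opcoalg nb (T b) ∘ fmap N (chi b) ∘ lcoalg_of_opcoalg nb (S b)
               ∘ fmap N (cdelta S b))
  <-> (forall c, fmap (FComp N V) (cdelta Q c) ∘ nb c = nb (Q c) ∘ nb c).
Proof.
  intros Hn. split; intros E.
  - apply (transpose_cancel (eta := eta) (eps := eps) (N := N) (sigma := sq_paste Om Om)
             (X := fun c => fmap (FComp N V) (cdelta Q c) ∘ nb c)
             (Y := fun c => nb (Q c) ∘ nb c)).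
    + exact mate_paste_iso.
    + exact (natural_opcoalg_comult HQ Hn).
    + exact (natural_opcoalg_twice Hn).
    + intro b. rewrite <- lcoalg_of_opcoalg_comult_l, <- (lcoalg_of_opcoalg_comult_r b Hn).
      apply E.
  - intro b. rewrite lcoalg_of_opcoalg_comult_l, lcoalg_of_opcoalg_comult_r by exact Hn.
    f_equal. apply E.
Qed.

Lemma lcoalg_of_opcoalg_counitP nb : natural nb ->
  (forall b, fmap N (ceps T b) ∘ lcoalg_of_opcoalg nb b = fmap N (ceps S b))
  <-> (forall c, fmap (FComp N V) (ceps Q c) ∘ nb c = idm _).
Proof.
  intros Hn. split; intros E.
  - apply (transpose_cancel (eta := eta) (eps := eps) (N := N) (sigma := sq_id G)
             (X := fun c => fmap (FComp N V) (ceps Q c) ∘ nb c)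
             (Y := fun c => idm (N (V c)))).
    + intro c. rewrite (mate_sq_id Hadj). exists (idm _). split; apply comp_id_l.
    + exact (natural_opcoalg_counit HQ Hn).
    + intros c c' f. comp_norm. reflexivity.
    + intro b. rewrite <- lcoalg_of_opcoalg_counit, E. unfold transpose, sq_id. comp_norm.
      reflexivity.
  - intro b. rewrite lcoalg_of_opcoalg_counit, E. unfold transpose, sq_id. comp_norm.
    reflexivity.
Qed.

Lemma left_coalg_lcoalg_of_opcoalg nb : natural nb ->
  left_coalg S T chi N (lcoalg_of_opcoalg nb) <-> opcoalg Q (FComp N V) nb.
Proof.
  intros Hn. unfold left_coalg, opcoalg.
  rewrite (lcoalg_of_opcoalg_comultP Hn), (lcoalg_of_opcoalg_counitP Hn).
  pose proof (natural_lcoalg_of_opcoalg Hn). tauto.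
Qed.

Lemma left_coalg_opcoalg_bij :
  in_bijection {l | left_coalg S T chi N l} {nb | opcoalg Q (FComp N V) nb}.
Proof.
  apply in_bijection_sym.
  apply (in_bijection_sig (NX := fun nb => natural nb) (NY := fun l => natural l)
           (f := lcoalg_of_opcoalg) (g := opcoalg_of_lcoalg)).
  - intros nb Hn. exact (proj1 Hn).
  - intros l Hl. exact (proj1 Hl).
  - exact natural_lcoalg_of_opcoalg.
  - exact natural_opcoalg_of_lcoalg.
  - exact lcoalg_of_opcoalgK.
  - exact opcoalg_of_lcoalgK.
  - exact left_coalg_lcoalg_of_opcoalg.
Qed.

End LeftCoalgebras.

Section OpcoalgebrasAlongEquivalence.

Variables (A Cc Z : Category) (K : Functor A Cc) (Kb : Functor Cc A) (P : Functor Cc Z).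
Variable Q : ComonadData Cc.
Hypothesis HQ : is_comonad Q.
Variables (phi : Trans (IdF A) (FComp Kb K)) (phiinv : Trans (FComp Kb K) (IdF A)).
Variables (xi : Trans (FComp K Kb) (IdF Cc)) (xiinv : Trans (IdF Cc) (FComp K Kb)).
Hypotheses (HKadj : is_adjunction K Kb phi xi) (Hphi : nat_iso phi phiinv)
  (Hxi : nat_iso xi xiinv).

Notation Qb := (Qbar Q xiinv phiinv).

Definition restrict_opcoalg (nb : Trans P (FComp P Q))
  : Trans (FComp P K) (FComp (FComp P K) Qb) :=
  fun a => fmap P (xiinv (Q (K a))) ∘ nb (K a).

Definition extend_opcoalg (nb : Trans (FComp P K) (FComp (FComp P K) Qb))
  : Trans P (FComp P Q) :=
  fun c => fmap P (fmap Q (xi c)) ∘ fmap P (xi (Q (K (Kb c)))) ∘ nb (Kb c) ∘ fmap P (xiinv c).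

Lemma fmap_unit_counit_inv a : fmap K (phi a) = xiinv (K a).
Proof.
  destruct HKadj as [_ [_ [Htri _]]]. destruct Hxi as [_ Hxii].
  transitivity ((xiinv (K a) ∘ xi (K a)) ∘ fmap K (phi a)).
  - rewrite (proj1 (Hxii (K a))). symmetry. apply comp_id_l.
  - comp_norm. rw_n (Htri a). reflexivity.
Qed.

Lemma fmap_unit_inv_counit_inv a : fmap K (phiinv a) ∘ xiinv (K a) = idm (K a).
Proof.
  destruct Hphi as [_ Hphii].
  rewrite <- fmap_unit_counit_inv.
  transitivity (fmap K (phiinv a ∘ phi a)); [now rewrite fmap_comp|].
  rewrite (proj1 (Hphii a)). exact (fmap_id K a).
Qed.

Lemma natural_restrict_opcoalg nb : natural nb -> natural (restrict_opcoalg nb).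
Proof.
  pose proof (natural_inv Hxi) as Hxiinv.
  intros Hn a a' h. unfold restrict_opcoalg. comp_norm.
  rw_n (f_equal (fmap P) (Hxiinv _ _ (fmap Q (fmap K h)))).
  rw_n (Hn _ _ (fmap K h)).
  reflexivity.
Qed.

Lemma natural_extend_opcoalg nb : natural nb -> natural (extend_opcoalg nb).
Proof.
  pose proof (natural_inv Hxi) as Hxiinv. destruct Hxi as [Hxin _].
  intros Hn c c' h. unfold extend_opcoalg. comp_norm.
  rw_n (f_equal (fmap P) (f_equal (fmap Q) (Hxin _ _ h))).
  rw_n (f_equal (fmap P) (Hxin _ _ (fmap Q (fmap K (fmap Kb h))))).
  rw_n (Hn _ _ (fmap Kb h)).
  rw_n (f_equal (fmap P) (Hxiinv _ _ h)).
  reflexivity.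
Qed.

Lemma restrict_opcoalgK nb : natural nb -> extend_opcoalg (restrict_opcoalg nb) = nb.
Proof.
  destruct Hxi as [_ Hxii].
  intros Hn. apply functional_extensionality_dep. intro c.
  unfold extend_opcoalg, restrict_opcoalg. comp_norm.
  rw_n (f_equal (fmap P) (proj2 (Hxii (Q (K (Kb c)))))).
  rw_n (Hn _ _ (xi c)).
  rw_n (f_equal (fmap P) (proj2 (Hxii c))).
  reflexivity.
Qed.

Lemma extend_opcoalgK nb : natural nb -> restrict_opcoalg (extend_opcoalg nb) = nb.
Proof.
  destruct HKadj as [_ [Hxin [Htri _]]]. destruct Hxi as [_ Hxii].
  intros Hn. apply functional_extensionality_dep. intro a.
  unfold extend_opcoalg, restrict_opcoalg. comp_norm.
  rewrite <- fmap_unit_counit_inv. comp_norm.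
  rw_n_r (Hn _ _ (phi a)).
  rw_n_r (f_equal (fmap P) (Hxin _ _ (fmap Q (fmap K (phi a))))).
  rw_n (f_equal (fmap P) (f_equal (fmap Q) (Htri a))).
  rw_n (f_equal (fmap P) (proj1 (Hxii (Q (K a))))).
  reflexivity.
Qed.

Lemma restrict_opcoalg_counit nb a :
  fmap (FComp P K) (ceps Qb a) ∘ restrict_opcoalg nb a = fmap P (ceps Q (K a)) ∘ nb (K a).
Proof.
  pose proof (natural_inv Hxi) as Hxiinv.
  unfold restrict_opcoalg. comp_norm.
  rw_n (f_equal (fmap P) (Hxiinv _ _ (ceps Q (K a)))).
  rw_n (f_equal (fmap P) (fmap_unit_inv_counit_inv a)).
  reflexivity.
Qed.

Lemma restrict_opcoalg_comult_l nb a :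
  fmap (FComp P K) (cdelta Qb a) ∘ restrict_opcoalg nb a
  = (fmap P (xiinv (Q (K (Kb (Q (K a)))))) ∘ fmap P (fmap Q (xiinv (Q (K a)))))
    ∘ (fmap P (cdelta Q (K a)) ∘ nb (K a)).
Proof.
  pose proof (natural_inv Hxi) as Hxiinv.
  unfold restrict_opcoalg. comp_norm.
  rw_n (f_equal (fmap P) (Hxiinv _ _ (cdelta Q (K a)))).
  rw_n (f_equal (fmap P) (Hxiinv _ _ (fmap Q (xiinv (Q (K a)))))).
  reflexivity.
Qed.

Lemma restrict_opcoalg_comult_r nb a : natural nb ->
  restrict_opcoalg nb (Qb a) ∘ restrict_opcoalg nb a
  = (fmap P (xiinv (Q (K (Kb (Q (K a)))))) ∘ fmap P (fmap Q (xiinv (Q (K a)))))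
    ∘ (nb (Q (K a)) ∘ nb (K a)).
Proof.
  intros Hn. unfold restrict_opcoalg. comp_norm.
  rw_n_r (Hn _ _ (xiinv (Q (K a)))).
  reflexivity.
Qed.

Lemma xi_iso c : is_iso (xi c).
Proof. destruct Hxi as [_ Hxii]. exists (xiinv c). apply Hxii. Qed.

Lemma restrict_opcoalg_comultP nb : natural nb ->
  (forall a, fmap (FComp P K) (cdelta Qb a) ∘ restrict_opcoalg nb a
             = restrict_opcoalg nb (Qb a) ∘ restrict_opcoalg nb a)
  <-> (forall c, fmap P (cdelta Q c) ∘ nb c = nb (Q c) ∘ nb c).
Proof.
  destruct Hxi as [_ Hxii]. intros Hn.
  assert (Himage : forall a,
    fmap (FComp P K) (cdelta Qb a) ∘ restrict_opcoalg nb a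
    = restrict_opcoalg nb (Qb a) ∘ restrict_opcoalg nb a
    <-> fmap P (cdelta Q (K a)) ∘ nb (K a) = nb (Q (K a)) ∘ nb (K a)).
  { intro a. rewrite restrict_opcoalg_comult_l, (restrict_opcoalg_comult_r a Hn).
    split; [|now intros ->].
    apply split_mono_cancel
      with (r := fmap P (fmap Q (xi (Q (K a)))) ∘ fmap P (xi (Q (K (Kb (Q (K a))))))).
    comp_norm.
    rw_n (f_equal (fmap P) (proj2 (Hxii (Q (K (Kb (Q (K a)))))))).
    rw_n (f_equal (fmap P) (f_equal (fmap Q) (proj2 (Hxii (Q (K a)))))).
    reflexivity. }
  split; intros E.
  - apply (natural_eq_on_image (K := K) (xi := xi) (P' := FComp P (FComp Q Q))
             (X := fun c => fmap P (cdelta Q c) ∘ nb c) (Y := fun c => nb (Q c) ∘ nb c)).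
    + exact xi_iso.
    + exact (natural_opcoalg_comult HQ Hn).
    + exact (natural_opcoalg_twice Hn).
    + intro a. apply Himage, E.
  - intro a. apply Himage, E.
Qed.

Lemma restrict_opcoalg_counitP nb : natural nb ->
  (forall a, fmap (FComp P K) (ceps Qb a) ∘ restrict_opcoalg nb a = idm _)
  <-> (forall c, fmap P (ceps Q c) ∘ nb c = idm _).
Proof.
  intros Hn. split; intros E.
  - apply (natural_eq_on_image (K := K) (xi := xi) (P' := FComp P (IdF Cc))
             (X := fun c => fmap P (ceps Q c) ∘ nb c) (Y := fun c => idm (P c))).
    + exact xi_iso.
    + exact (natural_opcoalg_counit HQ Hn).
    + intros c c' f. comp_norm. reflexivity.
    + intro a. rewrite <- restrict_opcoalg_counit. apply E.
  - intro a. rewrite restrict_opcoalg_counit. apply E.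
Qed.

Lemma opcoalg_restrict_opcoalg nb : natural nb ->
  opcoalg Qb (FComp P K) (restrict_opcoalg nb) <-> opcoalg Q P nb.
Proof.
  intros Hn. unfold opcoalg.
  rewrite (restrict_opcoalg_comultP Hn), (restrict_opcoalg_counitP Hn).
  pose proof (natural_restrict_opcoalg Hn). tauto.
Qed.

Lemma opcoalg_restrict_bij :
  in_bijection {nb | opcoalg Q P nb} {nb | opcoalg Qb (FComp P K) nb}.
Proof.
  apply (in_bijection_sig (NX := fun nb => natural nb) (NY := fun nb => natural nb)
           (f := restrict_opcoalg) (g := extend_opcoalg)).
  - intros nb Hn. exact (proj1 Hn).
  - intros nb Hn. exact (proj1 Hn).
  - exact natural_restrict_opcoalg.
  - exact natural_extend_opcoalg.
  - exact restrict_opcoalgK.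
  - exact extend_opcoalgK.
  - exact opcoalg_restrict_opcoalg.
Qed.

End OpcoalgebrasAlongEquivalence.

Theorem corollary3p3
  (A B Cc : Category)
  (V : Functor Cc B) (G : Functor B Cc) (K : Functor A Cc) (U : Functor B A)
  (* F := V K (strictly), F -| U *)
  (eta : Trans (IdF A) (FComp U (FComp V K)))
  (eps : Trans (FComp (FComp V K) U) (IdF B))
  (Hadj : is_adjunction (FComp V K) U eta eps)
  (* V -| G, S := comonad of this adjunction *)
  (eta' : Trans (IdF Cc) (FComp G V)) (eps' : Trans (FComp V G) (IdF B))
  (Hadj' : is_adjunction V G eta' eps')
  (* comonad C on A, S lifts C via Om *)
  (Cm : ComonadData A) (HC : is_comonad Cm)
  (Om : Trans (FComp Cm U) (FComp U (FComp V G)))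
  (Ominv : Trans (FComp U (FComp V G)) (FComp Cm U))
  (HOm : nat_iso Om Ominv)
  (HOmlax : lax_morphism Cm (adj_comonad eta' eps') U Om)
  (* comonad Q on Cc, (G, Omt) lax isomorphism from Q to T *)
  (Q : ComonadData Cc) (HQ : is_comonad Q)
  (Omt : Trans (FComp Q G) (FComp G (FComp (FComp V K) U)))
  (Omtinv : Trans (FComp G (FComp (FComp V K) U)) (FComp Q G))
  (HOmt : nat_iso Omt Omtinv)
  (HOmtlax : lax_morphism Q (adj_comonad eta eps) G Omt)
  (Hmate : forall c : Cc, is_iso (mate eta' eps' Omt c))
  (* K -| Kb with invertible unit phi and counit xi *)
  (Kb : Functor Cc A)
  (phi : Trans (IdF A) (FComp Kb K)) (phiinv : Trans (FComp Kb K) (IdF A))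
  (xi : Trans (FComp K Kb) (IdF Cc)) (xiinv : Trans (IdF Cc) (FComp K Kb))
  (HKadj : is_adjunction K Kb phi xi)
  (Hphi : nat_iso phi phiinv) (Hxi : nat_iso xi xiinv)
  (* chi = psi^{-1} *)
  (Hchipsi : forall b : B,
      twist eta eps Om Ominv b ∘ twist eta' eps' Omt Omtinv b = idm _ /\
      twist eta' eps' Omt Omtinv b ∘ twist eta eps Om Ominv b = idm _) :
  forall (Z : Category) (N : Functor B Z),
    in_bijection
      { l : Trans (FComp N (FComp V G)) (FComp N (FComp (FComp V K) U))
        | left_coalg (adj_comonad eta' eps') (adj_comonad eta eps)
                     (twist eta eps Om Ominv) N l }
      { nb : Trans (FComp N (FComp V K)) (FComp (FComp N (FComp V K)) (Qbar Q xiinv phiinv))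
        | opcoalg (Qbar Q xiinv phiinv) (FComp N (FComp V K)) nb }.
Proof.
  intros Z N.
  destruct (trans_inverse Hmate) as [Linv HL].
  apply in_bijection_trans with {nb | opcoalg Q (FComp N V) nb}.
  - exact (left_coalg_opcoalg_bij Hadj' (T := adj_comonad eta eps) HQ HOmt HOmtlax HL
             (fun b => proj1 (Hchipsi b)) N).
  - exact (opcoalg_restrict_bij (FComp N V) HQ HKadj Hphi Hxi).
Qed.
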